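(* Let $m\ge3$, $p\in[m]$, and let $\lambda_1,\lambda_2$ be $\mathbb{Z}_2$-characteristic maps over $P_m$. Then the D-J classes of $\lambda_1$ and $\lambda_2$ are $p$-adjacent if and only if $\operatorname{supp}_{\lambda_1}p=\operatorname{supp}_{\lambda_2}p$.
   Context: $P_m$ is the simplicial complex on $[m]$ with facets $\{i,i+1\}$ (mod $m$). For a pure $(n-1)$-dimensional simplicial complex $K$ on a vertex set $V$, a $\mathbb{Z}_2$-characteristic map over $K$ is a map $\lambda\colon V\to\mathbb{Z}_2^n$ such that the images of the vertices of every face are linearly independent; $\lambda,\lambda'$ are D-J equivalent if $\lambda'=\phi\circ\lambda$ with $\phi\in GL(n,\mathbb{Z}_2)$. For a face $\sigma$ of $K$, the projection $\operatorname{proj}_\sigma\lambda$ is the characteristic map over the link $\operatorname{lk}_K\sigma$ given by $w\mapsto[\lambda(w)]\in\mathbb{Z}_2^n/\langle\lambda(v):v\in\sigma\rangle\cong\mathbb{Z}_2^{n-|\sigma|}$ (well defined up to D-J equivalence). The wedge $\mathrm{wed}_pK$ is the simplicial complex on $(V\setminus\{p\})\cup\{p_1,p_2\}$ whose minimal non-faces are the minimal non-faces of $K$ not containing $p$, together with $(\tau\setminus\{p\})\cup\{p_1,p_2\}$ for each minimal non-face $\tau\ni p$ of $K$. The link of $p_2$ (resp. $p_1$) in $\mathrm{wed}_pK$ is identified with $K$ via $p_1\mapsto p$ (resp. $p_2\mapsto p$) and identity on other vertices. Two D-J classes $\lambda_1,\lambda_2$ over $K$ are $p$-adjacent if there is a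 $\mathbb{Z}_2$-characteristic map $\Lambda$ over $\mathrm{wed}_pK$ with $\operatorname{proj}_{p_2}\Lambda\simeq\lambda_1$ and $\operatorname{proj}_{p_1}\Lambda\simeq\lambda_2$ (D-J equivalent); $\lambda_1=\lambda_2$ is allowed. For a characteristic map $\lambda$ over $P_m$, $\operatorname{supp}_\lambda p=\lambda^{-1}(\lambda(p))$, which depends only on the D-J class. *)

From HB Require Import structures.
From mathcomp Require Import all_boot all_order all_algebra.
Set Implicit Arguments. Unset Strict Implicit. Unset Printing Implicit Defensive.
Import GRing.Theory.
Local Open Scope ring_scope.

(* A simplicial complex on a finite vertex type V is given by its set of
   faces, as a boolean predicate on {set V}. *)

(* lambda is a Z_2-characteristic map over K: images of the vertices of every
   face are linearly independent (free as a sequence, hence also pairwise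
   distinct). *)
Definition char_map (V : finType) (n : nat) (K : pred {set V})
    (lam : V -> 'rV['F_2]_n) : Prop :=
  forall s : {set V}, K s -> free [seq lam v | v <- enum s].

(* D-J equivalence: lam' = phi o lam with phi in GL(n, Z_2)
   (row-vector convention: phi acts by right multiplication by A). *)
Definition DJ_equiv (V : finType) (n : nat) (lam lam' : V -> 'rV['F_2]_n) : Prop :=
  exists A : 'M['F_2]_n, A \in unitmx /\ forall v, lam' v = lam v *m A.

Definition face_mx (W : finType) (N : nat) (Lam : W -> 'rV['F_2]_N)
    (s : {set W}) : 'M['F_2]_(size (enum s), N) :=
  \matrix_(i < size (enum s)) nth 0 [seq Lam v | v <- enum s] i.

(* mu is (a representative of) proj_s Lam, where the vertex set of the link of
   s is identified with V via iota : mu w = [Lam (iota w)] in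
   Z_2^N / <Lam v : v in s>, transported to Z_2^k by a linear isomorphism. *)
Definition proj_rep (W V : finType) (N k : nat) (Lam : W -> 'rV['F_2]_N)
    (s : {set W}) (iota : V -> W) (mu : V -> 'rV['F_2]_k) : Prop :=
  exists phi : 'M['F_2]_(N, k),
    [/\ \rank phi = k,
        (kermx phi == face_mx Lam s)%MS
      & forall w, mu w = Lam (iota w) *m phi].

Definition min_nonface (V : finType) (K : pred {set V}) (t : {set V}) : bool :=
  ~~ K t && [forall v in t, K (t :\ v)].

(* Wedge wed_p K, on the vertex type option V:
   Some v  <-> v  (v <> p),   Some p <-> p1,   None <-> p2. *)
Definition p1 (V : finType) (p : V) : option V := Some p.
Definition p2 (V : finType) : option V := None.

Definition wedge_mnf (V : finType) (p : V) (t : {set V}) : {set option V} :=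
  if p \in t then (Some @: (t :\ p)) :|: [set p1 p; p2 V]
  else Some @: t.

Definition wedge (V : finType) (K : pred {set V}) (p : V) : pred {set option V} :=
  fun s => [forall t : {set V}, min_nonface K t ==> ~~ (wedge_mnf p t \subset s)].

(* identification of lk p2 with K (p1 |-> p) and of lk p1 with K (p2 |-> p) *)
Definition iota_lk_p2 (V : finType) (p : V) (v : V) : option V := Some v.
Definition iota_lk_p1 (V : finType) (p : V) (v : V) : option V :=
  if v == p then p2 V else Some v.

Definition p_adjacent (V : finType) (n : nat) (K : pred {set V}) (p : V)
    (lam1 lam2 : V -> 'rV['F_2]_n) : Prop :=
  exists Lam : option V -> 'rV['F_2]_n.+1,
    [/\ char_map (wedge K p) Lam,
        (exists mu, proj_rep Lam [set p2 V] (iota_lk_p2 p) mu /\ DJ_equiv mu lam1)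
      & (exists mu, proj_rep Lam [set p1 p] (iota_lk_p1 p) mu /\ DJ_equiv mu lam2)].

Definition Pm (m : nat) : pred {set 'I_m} :=
  fun s => (#|s| <= 1)%N || [exists i : 'I_m, s \subset [set i; ordS i]].

Definition supp (V : finType) (n : nat) (lam : V -> 'rV['F_2]_n) (p : V) : {set V} :=
  [set v | lam v == lam p].
Arguments Pm m : clear implicits.

From HB Require Import structures.
From mathcomp Require Import all_boot all_order all_algebra.
Set Implicit Arguments. Unset Strict Implicit. Unset Printing Implicit Defensive.
Import GRing.Theory.
Local Open Scope ring_scope.

(* For v <> p, the projections of a characteristic map L over the wedge from p2
   and from p1 both identify v with p exactly when L(v) + L(p1) + L(p2) = 0
   (the edges {p1, v} and {p2, v} of the wedge exclude L(v) = L(p1), L(p2)),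
   so they give the same support of p.
   Conversely, pick M in GL(2, Z_2) with lam1(p) M = lam2(p) and lift lam1 to
   L(v) = (lam1(v), h v), L(p2) = (0, 1). Projecting from p2 drops the last
   coordinate; projecting from p1 is (x, t) |-> x M + t lam2(p), which kills
   L(p1) when h p = 1. For v <> p the height h v in Z_2 can be chosen to make
   it return lam2(v): if v is in the common support, h v = 0 works; otherwise
   lam1(v) M and lam2(v) both differ from lam2(p), so they are equal or the
   three sum to zero, as any three distinct nonzero vectors of Z_2^2 do.
   Each face of the wedge is the lift of a face of K, with possibly p1 or p2
   added, and that extra vertex spans the kernel of the corresponding
   projection, so the face stays independent. *)

Lemma F2P (x : 'F_2) : x = 0 \/ x = 1.
Proof. by case: x => [[|[|//]]] ?; [left|right]; apply: val_inj. Qed.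

Lemma oppmx_F2 a b (u : 'M['F_2]_(a, b)) : - u = u.
Proof. by apply/matrixP => i j; rewrite mxE oppr_pchar2 // pchar_Fp. Qed.

Lemma addmx_eq0_F2 a b (u v : 'M['F_2]_(a, b)) : (u + v == 0) = (u == v).
Proof. by rewrite addr_eq0 oppmx_F2. Qed.

Lemma addmx_eq_F2 a b (u v w : 'M['F_2]_(a, b)) : (u + v == w) = (u == w + v).
Proof. by rewrite -[v in LHS]oppmx_F2 subr_eq. Qed.

Lemma addmxx_F2 a b (u : 'M['F_2]_(a, b)) : u + u = 0.
Proof. by apply/eqP; rewrite addmx_eq0_F2. Qed.

Lemma F2_plane_sum (x y z : 'rV['F_2]_2) :
  x != 0 -> y != 0 -> z != 0 -> x != y -> x != z -> y != z -> x + y = z.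
Proof.
move=> x0 y0 z0 xy xz yz; apply/eqP; apply: contraT => xyz.
have xy0 : x + y != 0 by rewrite addmx_eq0_F2.
have xyx : x + y != x by rewrite addrC addmx_eq_F2 addmxx_F2; exact: y0.
have xyy : x + y != y by rewrite addmx_eq_F2 addmxx_F2; exact: x0.
have uniq5 : uniq [:: x + y; x; y; z; 0].
  by rewrite /= !inE !negb_or xyx xyy xyz xy0 xy xz x0 yz y0 z0.
have := max_card (mem [:: x + y; x; y; z; 0]).
by rewrite (card_uniqP uniq5) card_mx card_Fp.
Qed.

Section FreeUnderMulmx.
Variables (F : fieldType) (m n : nat) (P : 'M[F]_(m, n)).

Let f : 'Hom('rV[F]_m, 'rV[F]_n) := linfun (mulmxr P).

Let mapE (X : seq 'rV[F]_m) : [seq x *m P | x <- X] = map f X.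
Proof. by apply: eq_map => x; rewrite lfunE. Qed.

Lemma free_of_mulmx (X : seq 'rV[F]_m) : free [seq x *m P | x <- X] -> free X.
Proof.
rewrite mapE => /eqP fXfree; rewrite /free eqn_leq dim_span -{1}(size_map f) -fXfree.
by rewrite -limg_span -(limg_ker_dim f <<X>>) leq_addl.
Qed.

Lemma free_cons_kermx x (X : seq 'rV[F]_m) :
  x != 0 -> x *m P = 0 -> free [seq y *m P | y <- X] -> free (x :: X).
Proof.
move=> x0 xP; rewrite mapE => /eqP fXfree; have fx0 : f x = 0 by rewrite lfunE.
(* rank-nullity on <<x :: X>>: the image has dimension size X, the kernel contains x *)
rewrite /free eqn_leq dim_span /=.
rewrite -(limg_ker_dim f) limg_span /= fx0 [<<0%R :: _>>%VS]span_cons add0v.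
rewrite fXfree size_map -[X in (X < _)%N]add0n ltn_add2r lt0n dimv_eq0.
apply: contra x0 => /eqP U0.
by rewrite -memv0 -U0 memv_cap memv_span ?mem_head // memv_ker fx0 eqxx.
Qed.

End FreeUnderMulmx.

Section RowVectors.
Variable F : fieldType.

Lemma rV_pid_unitmx n (c : 'rV[F]_n) :
  c != 0 -> exists2 U, U \in unitmx & c = pid_mx 1 *m U.
Proof.
move=> c0; set a := col_ebase c 0 0.
have a_unit : a \is a GRing.unit by rewrite /a -det_mx11 -unitmxE col_ebase_unit.
exists (a *: row_ebase c); first by rewrite unitmxZ // row_ebase_unit.
rewrite -scalemxAr -[c in LHS]mulmx_ebase rank_rV c0 [col_ebase c]mx11_scalar.
by rewrite mul_scalar_mx scalemxAl.
Qed.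

Lemma rV_unitmx_transitive n (c1 c2 : 'rV[F]_n) :
  c1 != 0 -> c2 != 0 -> exists2 M, M \in unitmx & c1 *m M = c2.
Proof.
move=> /rV_pid_unitmx[U1 U1u ->] /rV_pid_unitmx[U2 U2u ->].
by exists (invmx U1 *m U2); rewrite ?unitmx_mul ?unitmx_inv ?U1u // mulmxA mulmxK.
Qed.

Lemma rank_col_mx_unit n (M : 'M[F]_n) (c : 'rV[F]_n) :
  M \in unitmx -> \rank (col_mx M c) = n.
Proof.
move=> Mu; apply/eqP; rewrite eqn_leq rank_leq_col -{1}(mxrank_unit Mu).
by apply: mxrankS; rewrite -addsmxE addsmxSl.
Qed.

Lemma kermx_line k (phi : 'M[F]_(k.+1, k)) (b : 'rV[F]_k.+1) :
  \rank phi = k -> b != 0 -> b *m phi = 0 -> (kermx phi :=: b)%MS.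
Proof.
move=> rk_phi b0 b_ker; apply/eqmxP; rewrite andbC sub_kermx b_ker eqxx /=.
by rewrite -mxrank_leqif_sup ?sub_kermx ?b_ker // mxrank_ker rk_phi rank_rV b0 subSnn.
Qed.

End RowVectors.

Section Projections.
Variables (W V : finType) (N k : nat) (Lam : W -> 'rV['F_2]_N).

Lemma face_mx1 w : (face_mx Lam [set w] :=: Lam w)%MS.
Proof.
rewrite /face_mx enum_set1.
suff -> : \matrix_(i < 1) nth 0 [seq Lam v | v <- [:: w]] i = Lam w by [].
by apply/matrixP => i j; rewrite !mxE (ord1 i).
Qed.

Lemma mulmx_eq0_line_F2 (phi : 'M['F_2]_(N, k)) (b u : 'rV['F_2]_N) :
  (kermx phi :=: b)%MS -> (u *m phi == 0) = (u == 0) || (u == b).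
Proof.
move=> kerE; rewrite -sub_kermx kerE; apply/sub_rVP/orP => [[a ->]|[]/eqP->].
- by case: (F2P a) => ->; [left|right]; rewrite ?scale0r ?scale1r.
- by exists 0; rewrite scale0r.
- by exists 1; rewrite scale1r.
Qed.

Lemma proj_rep_eq w (iota : V -> W) (mu : V -> 'rV['F_2]_k) x y :
  proj_rep Lam [set w] iota mu ->
  (mu x == mu y) =
    (Lam (iota x) == Lam (iota y)) || (Lam (iota x) + Lam (iota y) == Lam w).
Proof.
case=> phi [_ /eqmxP kerE muE].
rewrite !muE -addmx_eq0_F2 -mulmxDl.
by rewrite (mulmx_eq0_line_F2 _ (eqmx_trans kerE (face_mx1 w))) addmx_eq0_F2.
Qed.

End Projections.

Lemma proj_rep_line (W V : finType) k (Lam : W -> 'rV['F_2]_k.+1) w (iota : V -> W)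
    (phi : 'M['F_2]_(k.+1, k)) :
  \rank phi = k -> Lam w != 0 -> Lam w *m phi = 0 ->
  proj_rep Lam [set w] iota (fun v => Lam (iota v) *m phi).
Proof.
move=> rk_phi w0 w_ker; exists phi; split => //; apply/eqmxP.
exact: eqmx_trans (kermx_line rk_phi w0 w_ker) (eqmx_sym (face_mx1 Lam w)).
Qed.

Lemma exists_min_nonface (V : finType) (K : pred {set V}) (t : {set V}) :
  ~~ K t -> exists2 t' : {set V}, t' \subset t & min_nonface K t'.
Proof.
have [n] := ubnP #|t|; elim: n t => // n IHn t; rewrite ltnS => t_n Kt.
have [t_min | /forall_inPn[v vt Ktv]] := boolP [forall v in t, K (t :\ v)].
  by exists t; rewrite // /min_nonface Kt.
have tv_n : (#|t :\ v| < n)%N by rewrite (cardsD1 v t) vt in t_n.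
have [t' t't t'_min] := IHn _ tv_n Ktv.
by exists t' => //; apply: subset_trans t't (subD1set t v).
Qed.

Section Wedge.
Variables (V : finType) (K : pred {set V}) (p : V).

Definition wedge_base (s : {set option V}) : {set V} := [set v | Some v \in s].

Lemma wedge_mnfS (t' t : {set V}) :
  t' \subset t -> wedge_mnf p t' \subset wedge_mnf p t.
Proof.
move=> t't; rewrite /wedge_mnf; case: ifP => pt'; case: ifP => pt.
- exact/setSU/imsetS/setSD.
- by rewrite (subsetP t't p pt') in pt.
- apply/subset_trans/subsetUl/imsetS/subsetP => x xt'.
  by rewrite !inE (subsetP t't x xt') andbT; apply: contraFneq pt' => <-.
- exact: imsetS.
Qed.

Lemma wedge_nonface (s : {set option V}) (t : {set V}) :
  wedge K p s -> ~~ K t -> ~~ (wedge_mnf p t \subset s).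
Proof.
move=> ws /exists_min_nonface[t' t't t'_min].
apply: contra (implyP (forallP ws t') t'_min); exact: subset_trans (wedge_mnfS t't).
Qed.

Lemma imset_Some_sub (s : {set option V}) (A : {set V}) :
  A \subset wedge_base s -> Some @: A \subset s.
Proof. by move=> /subsetP As; apply/subsetP => _ /imsetP[v /As + ->]; rewrite inE. Qed.

Lemma wedge_face_baseD1 (s : {set option V}) : wedge K p s -> K (wedge_base s :\ p).
Proof.
move=> ws; apply/negPn/negP => /(wedge_nonface ws)/negP; apply.
by rewrite /wedge_mnf setD11 imset_Some_sub ?subD1set.
Qed.

Lemma wedge_face_base (s : {set option V}) :
  wedge K p s -> p2 V \in s -> K (wedge_base s).
Proof.
move=> ws p2s; apply/negPn/negP => /(wedge_nonface ws)/negP; apply.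
rewrite /wedge_mnf; case: ifP => [pT|_]; last exact: imset_Some_sub.
rewrite subUset imset_Some_sub ?subD1set // subUset !sub1set p2s andbT.
by rewrite inE in pT.
Qed.

Lemma wedge_edges (v : V) : (forall t : {set V}, #|t| <= 1 -> K t)%N -> v != p ->
  wedge K p [set p1 p; Some v] /\ wedge K p [set p2 V; Some v].
Proof.
move=> K_small vp.
suff edge (s : {set option V}) : [set p1 p; p2 V] \subset s = false ->
    {subset wedge_base s <= [set p; v]} -> wedge K p s.
  split; apply: edge.
  - by rewrite subUset !sub1set !inE /p2 andbF.
  - by move=> x; rewrite !inE /p1 => /orP[] /eqP[->]; rewrite eqxx ?orbT.
  - rewrite subUset !sub1set !inE /p1 /p2 /= andbT (inj_eq Some_inj).
    by rewrite eq_sym (negbTE vp).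
  - by move=> x; rewrite !inE /p2 => /orP[//|/eqP[->]]; rewrite eqxx orbT.
move=> p12s sv; apply/forallP => t; apply/implyP => /andP[Kt _]; apply/negP.
rewrite /wedge_mnf; case: ifP => pt; first by rewrite subUset p12s andbF.
move=> /subsetP ts; apply/negP: Kt; rewrite negbK K_small // -(cards1 v) subset_leq_card //.
apply/subsetP => x xt; have /set2P[xp|->] : x \in [set p; v] by rewrite sv // inE ts ?imset_f.
  by rewrite xp pt in xt.
by rewrite set11.
Qed.

End Wedge.

Lemma perm_enum_setD1 (T : finType) (A : {set T}) x :
  x \in A -> perm_eq (enum A) (x :: enum (A :\ x)).
Proof.
move=> xA; apply: uniq_perm; rewrite /= ?mem_enum ?setD11 ?enum_uniq // => y.
by rewrite inE !mem_enum !inE; case: eqVneq => // ->.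
Qed.

Lemma perm_enum_option (V : finType) (s : {set option V}) :
  perm_eq (enum s) (if None \in s then None :: map Some (enum (wedge_base s))
                    else map Some (enum (wedge_base s))).
Proof.
have Tuniq : uniq (map Some (enum (wedge_base s))).
  by rewrite (map_inj_uniq Some_inj) enum_uniq.
have NT : None \notin map Some (enum (wedge_base s)) by apply/negP => /mapP[? _ []].
have memT v : (Some v \in map Some (enum (wedge_base s))) = (Some v \in s).
  by rewrite (mem_map Some_inj) mem_enum inE.
case: ifP => Ns; apply: uniq_perm; rewrite ?enum_uniq /= ?NT //.
  by case=> [v|]; rewrite mem_enum inE ?memT ?Ns.
by case=> [v|]; rewrite mem_enum ?memT ?Ns ?(negbTE NT).
Qed.

Lemma char_map_nz (V : finType) n (K : pred {set V}) (lam : V -> 'rV['F_2]_n) v :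
  K [set v] -> char_map K lam -> lam v != 0.
Proof. by move=> Kv /(_ _ Kv); rewrite enum_set1 seq1_free. Qed.

Lemma char_map_neq (W : finType) n (K : pred {set W}) (Lam : W -> 'rV['F_2]_n) a b :
  char_map K Lam -> K [set a; b] -> a != b -> Lam a != Lam b.
Proof.
move=> cm Kab ab; have := free_uniq (cm _ Kab).
rewrite (perm_uniq (perm_map Lam (perm_enum_setD1 (set21 a b)))) /= => /andP[+ _].
by apply: contra => /eqP ->; apply: map_f; rewrite mem_enum !inE eqxx orbT eq_sym ab.
Qed.

Lemma DJ_equiv_supp (V : finType) n (mu lam : V -> 'rV['F_2]_n) p :
  DJ_equiv mu lam -> supp lam p = supp mu p.
Proof.
by case=> A [A_unit lamE]; apply/setP => v; rewrite !inE !lamE (can_eq (mulmxK A_unit)).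
Qed.

Lemma p_adjacent_supp (V : finType) n (K : pred {set V}) p (lam1 lam2 : V -> 'rV['F_2]_n) :
  (forall t : {set V}, #|t| <= 1 -> K t)%N ->
  p_adjacent K p lam1 lam2 -> supp lam1 p = supp lam2 p.
Proof.
move=> K_small [Lam [cmL [mu1 [pr1 dj1]] [mu2 [pr2 dj2]]]].
rewrite (DJ_equiv_supp p dj1) (DJ_equiv_supp p dj2); apply/setP => v; rewrite !inE.
have [->|vp] := eqVneq v p; first by rewrite !eqxx.
have [edge1 edge2] := wedge_edges K_small vp.
have neq1 : (Lam (Some v) == Lam (Some p)) = false.
  by rewrite eq_sym; apply/negbTE/(char_map_neq cmL edge1); rewrite (inj_eq Some_inj) eq_sym.
have neq2 : (Lam (Some v) == Lam (p2 V)) = false.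
  by rewrite eq_sym; apply/negbTE/(char_map_neq cmL edge2).
rewrite (proj_rep_eq _ _ pr1) (proj_rep_eq _ _ pr2) /iota_lk_p2 /iota_lk_p1.
by rewrite eqxx (negbTE vp) neq1 neq2 /= addmx_eq_F2 [RHS]addmx_eq_F2 addrC.
Qed.

Lemma DJ_equiv_eq (V : finType) n (mu lam : V -> 'rV['F_2]_n) :
  mu =1 lam -> DJ_equiv mu lam.
Proof. by move=> mu_lam; exists 1%:M; split=> [|v]; rewrite ?unitmx1 ?mulmx1. Qed.

Section WedgeLift.
Variables (V : finType) (p : V) (lam1 lam2 : V -> 'rV['F_2]_2) (M : 'M['F_2]_2).

Definition lift_height v : 'M['F_2]_1 :=
  if (v == p) || (lam1 v *m M != lam2 v) then 1%:M else 0.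

Definition wedge_lift (o : option V) : 'rV['F_2]_(2 + 1) :=
  if o is Some v then row_mx (lam1 v) (lift_height v) else row_mx 0 1%:M.

Definition proj_p2_mx : 'M['F_2]_(2 + 1, 2) := col_mx 1%:M 0.
Definition proj_p1_mx : 'M['F_2]_(2 + 1, 2) := col_mx M (lam2 p).

Lemma wedge_lift_proj_p2 v : wedge_lift (Some v) *m proj_p2_mx = lam1 v.
Proof. by rewrite mul_row_col mulmx1 mulmx0 addr0. Qed.

Lemma wedge_lift_p2_proj_p2 : wedge_lift None *m proj_p2_mx = 0.
Proof. by rewrite mul_row_col mulmx1 mulmx0 addr0. Qed.

Lemma wedge_lift_p2_proj_p1 : wedge_lift None *m proj_p1_mx = lam2 p.
Proof. by rewrite mul_row_col mul0mx mul1mx add0r. Qed.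

Hypotheses (M_unit : M \in unitmx) (lam1pM : lam1 p *m M = lam2 p).
Hypotheses (lam1_nz : forall v, lam1 v != 0) (lam2_nz : forall v, lam2 v != 0).
Hypothesis supp12 : supp lam1 p = supp lam2 p.

Lemma wedge_lift_nz o : wedge_lift o != 0.
Proof.
case: o => [v|]; rewrite row_mx_eq0 negb_and ?lam1_nz // eqxx /=.
by apply/negP => /eqP/matrixP/(_ 0 0); rewrite !mxE.
Qed.

Lemma rank_proj_p2_mx : \rank proj_p2_mx = 2.
Proof. exact/rank_col_mx_unit/unitmx1. Qed.

Lemma rank_proj_p1_mx : \rank proj_p1_mx = 2.
Proof. exact: rank_col_mx_unit. Qed.

Lemma wedge_lift_p1_proj_p1 : wedge_lift (Some p) *m proj_p1_mx = 0.
Proof. by rewrite mul_row_col /lift_height eqxx mul1mx lam1pM addmxx_F2. Qed.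

Lemma wedge_lift_proj_p1 v : v != p -> wedge_lift (Some v) *m proj_p1_mx = lam2 v.
Proof.
move=> vp; rewrite mul_row_col /lift_height (negbTE vp) /=.
have [-> | lam1vM] := eqVneq (lam1 v *m M) (lam2 v); first by rewrite mul0mx addr0.
rewrite mul1mx; have /setP/(_ v) := supp12; rewrite !inE => supp12v.
have lam1vp : lam1 v != lam1 p.
  apply: contra lam1vM => /eqP lam1vp.
  by move: supp12v; rewrite lam1vp eqxx lam1pM => /esym/eqP ->.
apply: F2_plane_sum => //; rewrite ?lam2_nz ?(eq_sym (lam2 p)) -?supp12v //.
  by rewrite -(mul0mx _ M) (can_eq (mulmxK M_unit)).
by rewrite -lam1pM (can_eq (mulmxK M_unit)).
Qed.

Lemma wedge_lift_char_map K :
  char_map K lam1 -> char_map K lam2 -> char_map (wedge K p) wedge_lift.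
Proof.
move=> cm1 cm2 s ws; rewrite (perm_free (perm_map _ (perm_enum_option s))).
case: ifP => [p2s|_].
  rewrite map_cons; apply: (free_cons_kermx (P := proj_p2_mx)).
  - exact: wedge_lift_nz.
  - exact: wedge_lift_p2_proj_p2.
  by rewrite -!map_comp (eq_map wedge_lift_proj_p2); apply: cm1 (wedge_face_base ws p2s).
rewrite -map_comp; have [pT|pT] := boolP (p \in wedge_base s).
  rewrite (perm_free (perm_map _ (perm_enum_setD1 pT))) map_cons.
  apply: (free_cons_kermx (P := proj_p1_mx)).
  - exact: wedge_lift_nz.
  - exact: wedge_lift_p1_proj_p1.
  rewrite -map_comp (eq_in_map _ lam2 _).1; first exact: cm2 (wedge_face_baseD1 ws).
  by move=> v; rewrite mem_enum in_setD1 => /andP[vp _]; apply: wedge_lift_proj_p1.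
apply: (free_of_mulmx (P := proj_p2_mx)); rewrite -map_comp (eq_map wedge_lift_proj_p2).
have /setDidPl <- : [disjoint wedge_base s & [set p]] by rewrite disjoint_sym disjoints1.
exact: cm1 (wedge_face_baseD1 ws).
Qed.

End WedgeLift.

Lemma supp_p_adjacent (V : finType) (K : pred {set V}) p (lam1 lam2 : V -> 'rV['F_2]_2) :
  (forall t : {set V}, #|t| <= 1 -> K t)%N ->
  char_map K lam1 -> char_map K lam2 -> supp lam1 p = supp lam2 p ->
  p_adjacent K p lam1 lam2.
Proof.
move=> K_small cm1 cm2 supp12.
have nz1 v : lam1 v != 0 by apply: char_map_nz cm1; rewrite K_small ?cards1.
have nz2 v : lam2 v != 0 by apply: char_map_nz cm2; rewrite K_small ?cards1.
have [M M_unit lam1pM] := rV_unitmx_transitive (nz1 p) (nz2 p).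
exists (wedge_lift p lam1 lam2 M); split; first exact: wedge_lift_char_map.
  exists (fun v => wedge_lift p lam1 lam2 M (iota_lk_p2 p v) *m proj_p2_mx); split.
    by apply: proj_rep_line; rewrite ?rank_proj_p2_mx ?wedge_lift_nz ?wedge_lift_p2_proj_p2.
  exact/DJ_equiv_eq/wedge_lift_proj_p2.
exists (fun v => wedge_lift p lam1 lam2 M (iota_lk_p1 p v) *m proj_p1_mx p lam2 M); split.
  by apply: proj_rep_line; rewrite ?rank_proj_p1_mx ?wedge_lift_nz ?wedge_lift_p1_proj_p1.
apply: DJ_equiv_eq => v; rewrite /iota_lk_p1; have [->|vp] := eqVneq v p.
  exact: wedge_lift_p2_proj_p1.
exact: wedge_lift_proj_p1.
Qed.

Theorem lemma3 (m : nat) (hm : (3 <= m)%N) (p : 'I_m)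
    (lam1 lam2 : 'I_m -> 'rV['F_2]_2) :
  char_map (Pm m) lam1 -> char_map (Pm m) lam2 ->
  (p_adjacent (Pm m) p lam1 lam2 <-> supp lam1 p = supp lam2 p).
Proof.
have Pm_small (t : {set 'I_m}) : (#|t| <= 1)%N -> Pm m t by rewrite /Pm => ->.
move=> cm1 cm2; split; first exact: p_adjacent_supp.
exact: supp_p_adjacent.
Qed.
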